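(* Let $R$ be a commutative ring with identity and $I$ an ideal of $R$. Then the amalgamated duplication $R\bowtie I$ is a pm-ring if and only if $R$ is a pm-ring.
   Context: $R\bowtie I:=\{(r,r+i)\mid r\in R,\ i\in I\}$, a subring of $R\times R$. A commutative ring is a pm-ring if every prime ideal is contained in a unique maximal ideal. *)

From HB Require Import structures.
From mathcomp Require Import all_boot all_algebra ring.
Set Implicit Arguments. Unset Strict Implicit. Unset Printing Implicit Defensive.
Import GRing.Theory.
Local Open Scope ring_scope.

Definition is_ideal (R : comPzRingType) (S : {pred R}) : Prop :=
  [/\ 0 \in S,
      (forall x y, x \in S -> y \in S -> x + y \in S) &
      (forall r x, x \in S -> r * x \in S)].

Definition is_prime_ideal (R : comPzRingType) (P : {pred R}) : Prop :=
  [/\ is_ideal P, 1 \notin P &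
      (forall a b, a * b \in P -> a \in P \/ b \in P)].

Definition is_maximal_ideal (R : comPzRingType) (M : {pred R}) : Prop :=
  [/\ is_ideal M, 1 \notin M &
      (forall J : {pred R}, is_ideal J -> {subset M <= J} ->
         J =i M \/ (forall x, x \in J))].

Definition pm_ring (R : comPzRingType) : Prop :=
  forall P : {pred R}, is_prime_ideal P ->
    exists M : {pred R}, [/\ is_maximal_ideal M, {subset P <= M} &
      (forall M' : {pred R}, is_maximal_ideal M' -> {subset P <= M'} -> M' =i M)].

(* Amalgamated duplication R ⋈ I = {(r, r + i) | r in R, i in I},
   as a subring of R × R. *)
Record ideal (R : comPzRingType) := Ideal {
  ideal_pred :> {pred R};
  ideal_is_ideal : is_ideal ideal_pred }.

Section Amalg.
Variables (R : comPzRingType) (I : ideal R).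

Definition amalg_pred : {pred R * R} := fun x => x.2 - x.1 \in ideal_pred I.

Lemma amalg_subring_closed : GRing.subring_closed amalg_pred.
Proof.
case: (ideal_is_ideal I) => I0 ID IM.
have IN : forall x, x \in I -> - x \in I.
  by move=> x Hx; rewrite -mulN1r; apply: IM.
split.
- by rewrite /amalg_pred unfold_in /= subrr.
- move=> x y; rewrite /amalg_pred !unfold_in /= => Hx Hy.
  have -> : x.2 - y.2 - (x.1 - y.1) = (x.2 - x.1) + - (y.2 - y.1) by ring.
  by apply: ID => //; apply: IN.
- move=> x y; rewrite /amalg_pred !unfold_in /= => Hx Hy.
  have -> : x.2 * y.2 - x.1 * y.1 = x.2 * (y.2 - y.1) + y.1 * (x.2 - x.1) by ring.
  by apply: ID; apply: IM.
Qed.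

Definition amalg := {x : R * R | x \in amalg_pred}.
HB.instance Definition _ := [isSub for (@sval _ (fun x => x \in amalg_pred))
  : amalg -> (R * R)%type].
HB.instance Definition _ := [Choice of amalg by <:].
HB.instance Definition _ := GRing.SubChoice_isSubComPzRing.Build (R * R)%type
  amalg_pred amalg amalg_subring_closed.
End Amalg.

(* The projections of R ⋈ I onto its two coordinates are ring retractions with
   the diagonal r |-> (r, r) as common section.  For any retraction f : A -> R
   with section d, pulling back along f and along d are mutually inverse
   bijections between ideals of R and ideals of A containing ker f, and they
   preserve primality and maximality; so pm passes from A to R, and from R to
   every prime of A containing ker f.  Finally the two kernels multiply to
   zero, so every prime of R ⋈ I contains one of them. *)

From HB Require Import structures.
From mathcomp Require Import all_boot all_algebra.
From Stdlib Require Import Classical.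
Set Implicit Arguments. Unset Strict Implicit. Unset Printing Implicit Defensive.
Import GRing.Theory.
Local Open Scope ring_scope.

Section Ideals.
Variable A : comPzRingType.

Lemma idealN (S : {pred A}) x : is_ideal S -> x \in S -> - x \in S.
Proof. by case=> _ _ SM Sx; rewrite -mulN1r SM. Qed.

Lemma idealB (S : {pred A}) x y : is_ideal S -> x \in S -> y \in S -> x - y \in S.
Proof. by move=> SI Sx Sy; case: (SI) => _ SD _; rewrite SD ?idealN. Qed.

Lemma ideal1_full (S : {pred A}) : is_ideal S -> 1 \in S -> forall x, x \in S.
Proof. by case=> _ _ SM S1 x; rewrite -[x]mulr1 SM. Qed.

Definition unique_maximal_over (P : {pred A}) : Prop :=
  exists M : {pred A}, [/\ is_maximal_ideal M, {subset P <= M} &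
    (forall M' : {pred A}, is_maximal_ideal M' -> {subset P <= M'} -> M' =i M)].

Lemma prime_ideal_kernel_cases (B C : comPzRingType) (f : A -> B) (g : A -> C)
    (P : {pred A}) :
  is_prime_ideal P -> (forall a b, f a = 0 -> g b = 0 -> a * b = 0) ->
  (forall x, f x = 0 -> x \in P) \/ (forall x, g x = 0 -> x \in P).
Proof.
case=> [[P0 _ _] _ Pmul] fg0.
case: (classic (exists a, f a = 0 /\ a \notin P)) => [[a [fa0 aP]]|noa].
  right=> b gb0; have : a * b \in P by rewrite fg0.
  by case/Pmul => //; rewrite (negbTE aP).
left=> x fx0; case: (boolP (x \in P)) => // xP.
by case: noa; exists x.
Qed.

End Ideals.

Section Preimage.
Variables (A B : comPzRingType) (f : {rmorphism A -> B}).

Lemma preim_ideal (S : {pred B}) : is_ideal S -> is_ideal [preim f of S].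
Proof.
case=> S0 SD SM; split; first by rewrite inE rmorph0.
  by move=> x y; rewrite !inE rmorphD; apply: SD.
by move=> r x; rewrite !inE rmorphM; apply: SM.
Qed.

Lemma preim_prime_ideal (S : {pred B}) :
  is_prime_ideal S -> is_prime_ideal [preim f of S].
Proof.
case=> SI S1 Smul; split; first exact: preim_ideal.
  by rewrite inE rmorph1.
by move=> a b; rewrite !inE rmorphM; apply: Smul.
Qed.

End Preimage.

Section Retraction.
Variables (A R : comPzRingType) (f : {rmorphism A -> R}) (d : {rmorphism R -> A}).
Hypothesis fK : cancel d f.

Lemma mem_ideal_retract (Q : {pred A}) :
  is_ideal Q -> (forall x, f x = 0 -> x \in Q) ->
  forall x, (x \in Q) = (d (f x) \in Q).
Proof.
move=> QI kerQ x; have [_ QD _] := QI.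
have Qx_dfx : x - d (f x) \in Q by rewrite kerQ // rmorphB fK subrr.
apply/idP/idP => [Qx|Qdfx]; last by rewrite -(subrK (d (f x)) x) QD.
by rewrite -[d _](subKr x) idealB.
Qed.

Lemma preim_maximal_retract (M : {pred R}) :
  is_maximal_ideal M -> is_maximal_ideal [preim f of M].
Proof.
case=> MI M1 Mmax; split; [exact: preim_ideal | by rewrite inE rmorph1 |].
move=> J JI MJ.
have MdJ : {subset M <= [preim d of J]} by move=> m Mm; rewrite inE MJ // inE fK.
have [dJ_M|dJ_full] := Mmax _ (preim_ideal d JI) MdJ; last first.
  by right; apply: ideal1_full => //; move: (dJ_full 1); rewrite inE rmorph1.
have kerJ x : f x = 0 -> x \in J by move=> fx0; rewrite MJ // inE fx0; case: MI.
by left=> x; rewrite (mem_ideal_retract JI kerJ) inE -dJ_M inE.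
Qed.

Lemma preim_maximal_section (M : {pred A}) :
  is_maximal_ideal M -> (forall x, f x = 0 -> x \in M) ->
  is_maximal_ideal [preim d of M].
Proof.
case=> MI M1 Mmax kerM; split; [exact: preim_ideal | by rewrite inE rmorph1 |].
move=> J JI MJ.
have MfJ : {subset M <= [preim f of J]}.
  by move=> m Mm; rewrite inE MJ // inE -(mem_ideal_retract MI kerM).
have [fJ_M|fJ_full] := Mmax _ (preim_ideal f JI) MfJ; last first.
  by right; apply: ideal1_full => //; move: (fJ_full 1); rewrite inE rmorph1.
by left=> r; rewrite inE -fJ_M inE fK.
Qed.

Lemma pm_ring_retract : pm_ring A -> pm_ring R.
Proof.
move=> pmA P Pprime.
have kerfP x : f x = 0 -> x \in [preim f of P] by rewrite inE => ->; case: Pprime => -[].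
have [M [Mmax PM Muniq]] := pmA _ (preim_prime_ideal f Pprime).
have kerM x : f x = 0 -> x \in M by move/kerfP/PM.
exists ([preim d of M] : {pred R}); split; first exact: preim_maximal_section.
  by move=> p Pp; rewrite inE PM // inE fK.
move=> N Nmax PN r.
have fN_M := Muniq _ (preim_maximal_retract Nmax) (fun x => PN (f x)).
by rewrite inE -fN_M inE fK.
Qed.

Lemma unique_maximal_over_retract (Q : {pred A}) :
  pm_ring R -> is_prime_ideal Q -> (forall x, f x = 0 -> x \in Q) ->
  unique_maximal_over Q.
Proof.
move=> pmR Qprime kerQ; have [QI _ _] := Qprime.
have [N [Nmax dQN Nuniq]] := pmR _ (preim_prime_ideal d Qprime).
exists ([preim f of N] : {pred A}); split; first exact: preim_maximal_retract.
  by move=> x Qx; rewrite inE dQN // inE -(mem_ideal_retract QI kerQ).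
move=> M Mmax QM x; have [MI _ _] := Mmax.
have kerM y : f y = 0 -> y \in M by move/kerQ/QM.
have dM_N := Nuniq _ (preim_maximal_section Mmax kerM) (fun r => QM (d r)).
by rewrite (mem_ideal_retract MI kerM) inE -dM_N inE.
Qed.

End Retraction.

Section Amalgamation.
Variables (R : comPzRingType) (I : ideal R).

Definition amalg_fst : amalg I -> R := fst \o val.
Definition amalg_snd : amalg I -> R := snd \o val.

Lemma diag_in_amalg (r : R) : (r, r) \in amalg_pred I.
Proof. by rewrite unfold_in /amalg_pred /= subrr; case: (ideal_is_ideal I). Qed.

Definition amalg_diag (r : R) : amalg I := Sub (r, r) (diag_in_amalg r).

Lemma val_amalg_diag r : val (amalg_diag r) = (r, r).
Proof. exact: SubK. Qed.

Lemma amalg_diag_is_zmod_morphism : zmod_morphism amalg_diag.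
Proof. by move=> r s; apply: val_inj; rewrite rmorphB !val_amalg_diag. Qed.

Lemma amalg_diag_is_monoid_morphism : monoid_morphism amalg_diag.
Proof.
split=> [|r s]; apply: val_inj; first by rewrite rmorph1 val_amalg_diag.
by rewrite rmorphM !val_amalg_diag.
Qed.

HB.instance Definition _ :=
  GRing.isZmodMorphism.Build R (amalg I) amalg_diag amalg_diag_is_zmod_morphism.
HB.instance Definition _ :=
  GRing.isMonoidMorphism.Build R (amalg I) amalg_diag amalg_diag_is_monoid_morphism.

Lemma amalg_diagK_fst : cancel amalg_diag amalg_fst.
Proof. by move=> r; rewrite /amalg_fst /comp val_amalg_diag. Qed.

Lemma amalg_diagK_snd : cancel amalg_diag amalg_snd.
Proof. by move=> r; rewrite /amalg_snd /comp val_amalg_diag. Qed.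

Lemma amalg_kernels_mul0 x y : amalg_fst x = 0 -> amalg_snd y = 0 -> x * y = 0.
Proof.
rewrite /amalg_fst /amalg_snd /comp => x1_0 y2_0; apply: val_inj.
rewrite GRing.valM GRing.val0.
move: (val x) (val y) x1_0 y2_0 => [x1 x2] [y1 y2] /= -> ->.
by apply/eqP; rewrite xpair_eqE mul0r mulr0 eqxx.
Qed.

End Amalgamation.

Theorem corollary3p5 (R : comPzRingType) (I : ideal R) :
  pm_ring (amalg I) <-> pm_ring R.
Proof.
split; first exact: pm_ring_retract (@amalg_diagK_fst R I).
move=> pmR Q Qprime.
have [ker1|ker2] := prime_ideal_kernel_cases Qprime (@amalg_kernels_mul0 R I).
  exact: (unique_maximal_over_retract (@amalg_diagK_fst R I) pmR Qprime ker1).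
exact: (unique_maximal_over_retract (@amalg_diagK_snd R I) pmR Qprime ker2).
Qed.
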